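(* Assume the setting in the context (in particular $\lambda<\eta$). Let $$\tau=\min\Big\{\underline{\rho}\frac{\eta-\lambda}{L_{\nabla f}},\ \min\Big\{\underline{\rho}\frac{2(\eta-\lambda)}{L_{\nabla f}},\beta_0\Big\}\Big\}.$$ Then $\alpha_k\ge\tau$ for all $k$.
   Context: Let $g:\mathbb{R}^n\to\mathbb{R}$, $h:\mathbb{R}^n\times\mathbb{R}^d\to\mathbb{R}$ satisfy: (A1) $h$ twice differentiable in $x$, for each $\theta$ there are $0<\mu(\theta)\le L(\theta)$ with $\mu(\theta)I\preceq\nabla_x^2h(x,\theta)\preceq L(\theta)I$ for all $x$, $\nabla_xh,\nabla^2_xh$ continuous in $\theta$; (A2) $\nabla_x^2h$ is $L_H$-Lipschitz in $x$ and $\nabla^2_{x\theta}h$ is $L_J$-Lipschitz in $x$, uniformly in $\theta$. Let $\hat{x}(\theta)=\arg\min_xh(x,\theta)$, $f(\theta)=g(\hat{x}(\theta))$. (B) $f$ continuously differentiable with $L_{\nabla f}$-Lipschitz gradient, $g$ continuously differentiable with $L_{\nabla g}$-Lipschitz gradient, $L_{\nabla f},L_{\nabla g}>0$, $g$ bounded below. Fix $\beta_0>0$, $0<\underline{\rho}<1<\overline{\rho}$, $\lambda<\eta$ with $\eta\in(0,1)$. Consider sequences $\theta_k\in\mathbb{R}^d$, $z_k\in\mathbb{R}^d\setminus\{0\}$, $\epsilon_k\ge0$, $\tilde{x}_k\in\mathbb{R}^n$ with $\|\tilde{x}_k-\hat{x}(\theta_k)\|\le\epsilon_k$, $\alpha_k,\beta_k>0$,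 with $\theta_{k+1}=\theta_k-\alpha_kz_k$ and $\|z_k-\nabla f(\theta_k)\|\le(1-\eta)\|z_k\|$. Set $w_k=\|\nabla g(\tilde{x}_k)\|+\|\nabla g(\tilde{x}_{k+1})\|$, $\bar{\epsilon}_k=\max\{\epsilon_k,\epsilon_{k+1}\}$, $\hat{s}_k=\sqrt{(\eta-\lambda)^2-4L_{\nabla f}(w_k\bar{\epsilon}_k+L_{\nabla g}\bar{\epsilon}_k^2)/\|z_k\|^2}$ (assumed real), $\underline{\alpha}_k=(\eta-\lambda-\hat{s}_k)/L_{\nabla f}$, $\overline{\alpha}_k=(\eta-\lambda+\hat{s}_k)/L_{\nabla f}$. For every $k$: $\alpha_k=\underline{\rho}^{i_k}\beta_k$ where $i_k$ is the smallest nonnegative integer with $\underline{\rho}^{i_k}\beta_k\in[\underline{\alpha}_k,\overline{\alpha}_k]$; if $i_k>0$ then $\alpha_k>\underline{\rho}\,\overline{\alpha}_k$; and $\beta_{k+1}=\overline{\rho}\alpha_k$. *)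

From HB Require Import structures.
From mathcomp Require Import all_boot all_order all_algebra.
From mathcomp Require Import all_classical all_reals all_analysis.
Set Implicit Arguments. Unset Strict Implicit. Unset Printing Implicit Defensive.
Import Order.TTheory GRing.Theory Num.Theory.
Import numFieldNormedType.Exports.
Local Open Scope ring_scope.

Section Defs.
Variable R : realType.

Definition enorm (m : nat) (v : 'rV[R]_m) : R :=
  Num.sqrt (\sum_(i < m) v ord0 i ^+ 2).

Definition grad (m : nat) (f : 'rV[R]_m -> R) (x : 'rV[R]_m) : 'rV[R]_m :=
  \row_i ('d f x (delta_mx ord0 i)).

Definition hess (m : nat) (f : 'rV[R]_m -> R) (x : 'rV[R]_m) : 'M[R]_m :=
  \matrix_(i, j) ('d (fun y => grad f y ord0 j) x (delta_mx ord0 i)).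

Definition twice_differentiable (m : nat) (f : 'rV[R]_m -> R) : Prop :=
  (forall x, differentiable f x) /\ (forall x, differentiable (grad f) x).

Definition qform (m : nat) (A : 'M[R]_m) (v : 'rV[R]_m) : R :=
  (v *m A *m v^T) ord0 ord0.
Definition loewner_le (m : nat) (A B : 'M[R]_m) : Prop :=
  forall v : 'rV[R]_m, qform A v <= qform B v.

Definition gradx (n d : nat) (h : 'rV[R]_n -> 'rV[R]_d -> R) x th : 'rV[R]_n :=
  grad (fun y => h y th) x.
Definition hessx (n d : nat) (h : 'rV[R]_n -> 'rV[R]_d -> R) x th : 'M[R]_n :=
  hess (fun y => h y th) x.
Definition hessxth (n d : nat) (h : 'rV[R]_n -> 'rV[R]_d -> R) x th : 'M[R]_(n, d) :=
  \matrix_(i, j) ('d (fun t => gradx h x t ord0 i) th (delta_mx ord0 j)).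

End Defs.

From HB Require Import structures.
From mathcomp Require Import all_boot all_order all_algebra.
From mathcomp Require Import all_classical all_reals all_analysis.
Import Order.TTheory GRing.Theory Num.Theory.
Import numFieldNormedType.Exports.
Local Open Scope ring_scope.

(** Backtracking either accepts its first trial, so that alpha_k = beta_k,
   which is beta_0 or rho_up * alpha_(k-1) >= alpha_(k-1); or it backtracks
   at least once, and then alpha_k > rho_lo * aup_k >= rho_lo (eta - lambda) / L_f,
   since the upper end aup_k of the acceptance interval exceeds
   (eta - lambda) / L_f by a square root. An induction on k concludes. *)

Lemma ler_divr_addsqrt (R : rcfType) (a c r : R) :
  0 < c -> a / c <= (a + Num.sqrt r) / c.
Proof. by move=> c_gt0; rewrite ler_pM2r ?invr_gt0 // lerDl sqrtr_ge0. Qed.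

Lemma backtracking_step_ge (R : rcfType) (rho beta a c r tau alpha : R) (i : nat) :
  0 < rho -> 0 < c -> alpha = rho ^+ i * beta ->
  ((0 < i)%N -> rho * ((a + Num.sqrt r) / c) < alpha) ->
  tau <= rho * (a / c) -> tau <= beta -> tau <= alpha.
Proof.
move=> rho_gt0 c_gt0; case: i => [|i] -> backtracked tau_le tau_le_beta.
  by rewrite mul1r.
apply/ltW/(le_lt_trans tau_le)/(le_lt_trans _ (backtracked isT)).
by rewrite ler_pM2l // ler_divr_addsqrt.
Qed.

Lemma restarted_steps_ge (R : realDomainType) (tau rho_up : R) (alpha beta : nat -> R) :
  1 <= rho_up -> (forall k, 0 <= alpha k) ->
  (forall k, beta k.+1 = rho_up * alpha k) ->
  (forall k, tau <= beta k -> tau <= alpha k) ->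
  tau <= beta 0%N -> forall k, tau <= alpha k.
Proof.
move=> rho_up_ge1 alpha_ge0 beta_restart step tau_le_beta0.
elim=> [|k IHk]; first exact: step.
by apply: step; rewrite beta_restart (le_trans IHk) // ler_peMl.
Qed.

Theorem lemma3p14 (R : realType) (n d : nat)
  (g : 'rV[R]_n -> R) (h : 'rV[R]_n -> 'rV[R]_d -> R)
  (mu L : 'rV[R]_d -> R) (L_H L_J : R)
  (xhat : 'rV[R]_d -> 'rV[R]_n)
  (L_f L_g : R)
  (beta0 rho_lo rho_up eta lambda : R)
  (theta z : nat -> 'rV[R]_d) (eps : nat -> R) (xt : nat -> 'rV[R]_n)
  (alpha beta : nat -> R) :
  (* (A1) *)
  (forall th, twice_differentiable (fun x => h x th)) ->
  (forall th, 0 < mu th /\ mu th <= L th) ->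
  (forall x th, loewner_le (mu th)%:M (hessx h x th) /\
                loewner_le (hessx h x th) (L th)%:M) ->
  (forall x, continuous (fun th => gradx h x th)) ->
  (forall x, continuous (fun th => hessx h x th)) ->
  (* (A2) *)
  0 <= L_H -> 0 <= L_J ->
  (forall x th, differentiable (fun t => gradx h x t) th) ->
  (forall th x y (v : 'rV[R]_n),
     enorm (v *m (hessx h x th - hessx h y th)) <= L_H * enorm (x - y) * enorm v) ->
  (forall th x y (v : 'rV[R]_d),
     enorm (v *m (hessxth h x th - hessxth h y th)^T) <= L_J * enorm (x - y) * enorm v) ->
  (* xhat(theta) = argmin_x h(x, theta) *)
  (forall th x, h (xhat th) th <= h x th) ->
  (* (B), with f := g o xhat *)
  (forall th, differentiable (fun t => g (xhat t)) th) ->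
  continuous (grad (fun t => g (xhat t))) ->
  (forall th1 th2, enorm (grad (fun t => g (xhat t)) th1 - grad (fun t => g (xhat t)) th2)
                   <= L_f * enorm (th1 - th2)) ->
  (forall x, differentiable g x) ->
  continuous (grad g) ->
  (forall x1 x2, enorm (grad g x1 - grad g x2) <= L_g * enorm (x1 - x2)) ->
  0 < L_f -> 0 < L_g ->
  (exists m, forall x, m <= g x) ->
  (* parameters *)
  0 < beta0 -> 0 < rho_lo -> rho_lo < 1 -> 1 < rho_up ->
  0 < eta -> eta < 1 -> lambda < eta ->
  (* sequences *)
  (forall k, z k != 0) ->
  (forall k, 0 <= eps k) ->
  (forall k, enorm (xt k - xhat (theta k)) <= eps k) ->
  (forall k, 0 < alpha k) -> (forall k, 0 < beta k) ->
  beta 0%N = beta0 ->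
  (forall k, theta k.+1 = theta k - alpha k *: z k) ->
  (forall k, enorm (z k - grad (fun t => g (xhat t)) (theta k)) <= (1 - eta) * enorm (z k)) ->
  (* step-size rule *)
  (forall k,
     let w := enorm (grad g (xt k)) + enorm (grad g (xt k.+1)) in
     let ebar := Num.max (eps k) (eps k.+1) in
     let rad := (eta - lambda) ^+ 2
                - 4 * L_f * (w * ebar + L_g * ebar ^+ 2) / enorm (z k) ^+ 2 in
     let s := Num.sqrt rad in
     let alo := (eta - lambda - s) / L_f in
     let aup := (eta - lambda + s) / L_f in
     0 <= rad /\
     (exists i : nat,
        alpha k = rho_lo ^+ i * beta k /\
        alo <= rho_lo ^+ i * beta k <= aup /\
        (forall j : nat, (j < i)%N -> ~ (alo <= rho_lo ^+ j * beta k <= aup)) /\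
        ((0 < i)%N -> rho_lo * aup < alpha k)) /\
     beta k.+1 = rho_up * alpha k) ->
  forall k,
    Num.min (rho_lo * ((eta - lambda) / L_f))
            (Num.min (rho_lo * ((2 * (eta - lambda)) / L_f)) beta0) <= alpha k.
Proof.
move=> _ _ _ _ _ _ _ _ _ _ _ _ _ _ _ _ _ Lf_gt0 _ _ _ rho_lo_gt0 _ rho_up_gt1 _ _ _
  _ _ _ alpha_gt0 _ beta_0 _ _ step_rule.
set tau := Num.min _ _.
have tau_le_beta0 : tau <= beta0 by rewrite /tau !ge_min lexx !orbT.
have tau_le_first : tau <= rho_lo * ((eta - lambda) / L_f) by rewrite /tau ge_min lexx.
apply: (@restarted_steps_ge _ tau rho_up alpha beta).
- exact: ltW.
- by move=> k; apply: ltW.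
- by move=> k; have [_ [_ ->]] := step_rule k.
- move=> k; have [_ [[i [alpha_eq [_ [_ backtracked]]]] _]] := step_rule k.
  exact: backtracking_step_ge rho_lo_gt0 Lf_gt0 alpha_eq backtracked tau_le_first.
- by rewrite beta_0.
Qed.
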